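(* Let $k$ and $r$ be positive integers such that $r \mid k$ and $k \ge 2r$. Let $\chi : \{1, 2, \ldots, rk-2r+1\} \to \{0,1\}$ be a 2-coloring such that $\chi(1) = 0$ and, if $r \ge 2$, $\chi(r-1) = 0$. Then there exists a solution $(\hat{x}_1, \ldots, \hat{x}_k)$ of the equation $x_1 + \cdots + x_{k-1} = x_k$ with all $\hat{x}_i \in \{1, \ldots, rk-2r+1\}$ such that $\sum_{i=1}^k \chi(\hat{x}_i) \equiv 0 \pmod r$.
   Context: Solutions of the equation $x_1 + \cdots + x_{k-1} = x_k$ are taken in positive integers. A solution $(\hat{x}_1,\ldots,\hat{x}_k)$ is called $r$-zero-sum under $\chi$ if $\sum_{i=1}^k \chi(\hat{x}_i) \equiv 0 \pmod r$. *)

From mathcomp Require Import all_boot.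
Set Implicit Arguments. Unset Strict Implicit. Unset Printing Implicit Defensive.

(* A solution (x_1,...,x_k) of x_1 + ... + x_{k-1} = x_k is encoded as
   x : nat -> nat with x i = x_{i+1} for i < k. *)
Definition is_solution (k : nat) (x : nat -> nat) : Prop :=
  \sum_(i < k.-1) x i = x k.-1.

Definition entries_in (k N : nat) (x : nat -> nat) : Prop :=
  forall i, i < k -> 1 <= x i <= N.

Definition zero_sum (r k : nat) (chi : nat -> bool) (x : nat -> nat) : Prop :=
  \sum_(i < k) (chi (x i) : nat) = 0 %[mod r].

From mathcomp Require Import all_boot zify.

(* Every witness has the shape (a,...,a, b,...,b, t) with [A] copies of [a],
   [n] copies of [b] and [t = A a + n b], so its colour sum is
   [A chi(a) + n chi(b) + chi(t)].  If [r = 1] or [chi(k-1) = 0], the solution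
   (1,...,1, k-1) works.  Otherwise, with [N = rk - 2r + 1]:
   - if [chi(N) = 1], take [r-1] copies of [k-1] and [k-r] ones, sum [N],
     colour sum [(r-1) + 1 = r];
   - if [chi(N) = 0 = chi(r)], take [k-2] copies of [r] and a single one;
   - if [chi(N) = 0] and [chi(r) = 1], take [k-r] copies of [r] and [r-1]
     copies of [r-1]: the sum is [r(k-r) + (r-1)^2 = N], and the colour sum
     [k-r] vanishes modulo [r] because [r] divides [k]. *)

Lemma sum_two_blocks (F : nat -> nat) (A n a b : nat) :
  \sum_(i < A + n) F (if i < A then a else b) = A * F a + n * F b.
Proof.
rewrite big_split_ord /=.
under eq_bigr => i _ do rewrite ltn_ord.
under [X in _ + X]eq_bigr => i _ do rewrite ltnNge leq_addr.
by rewrite !sum_nat_const !card_ord.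
Qed.

Definition blocks (A n a b t : nat) : nat -> nat :=
  fun i => if i < A + n then (if i < A then a else b) else t.

Lemma sum_blocks_but_last (F : nat -> nat) (A n a b t : nat) :
  \sum_(i < A + n) F (blocks A n a b t i) = A * F a + n * F b.
Proof.
rewrite -sum_two_blocks; apply: eq_bigr => i _.
by rewrite /blocks ltn_ord.
Qed.

Lemma blocks_last (A n a b t : nat) : blocks A n a b t (A + n) = t.
Proof. by rewrite /blocks ltnn. Qed.

Lemma blocks_solution (A n a b t : nat) :
  A * a + n * b = t -> is_solution (A + n).+1 (blocks A n a b t).
Proof.
by move=> <-; rewrite /is_solution /= blocks_last (sum_blocks_but_last id).
Qed.

Lemma blocks_entries (A n a b t N : nat) :
  1 <= a <= N -> 1 <= b <= N -> 1 <= t <= N ->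
  entries_in (A + n).+1 N (blocks A n a b t).
Proof.
by move=> a_in b_in t_in i _; rewrite /blocks; case: (i < A + n); case: (i < A).
Qed.

Lemma blocks_colour_sum (chi : nat -> bool) (A n a b t : nat) :
  \sum_(i < (A + n).+1) (chi (blocks A n a b t i) : nat) =
  A * chi a + n * chi b + chi t.
Proof.
rewrite big_ord_recr /= blocks_last.
by rewrite (sum_blocks_but_last (fun v => chi v : nat)).
Qed.

Lemma blocks_witness {k r N : nat} {chi : nat -> bool} {A n a b t : nat} :
  k = (A + n).+1 -> A * a + n * b = t ->
  1 <= a <= N -> 1 <= b <= N -> 1 <= t <= N ->
  A * chi a + n * chi b + chi t = 0 %[mod r] ->
  exists x : nat -> nat,
    [/\ is_solution k x, entries_in k N x & zero_sum r k chi x].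
Proof.
move=> -> sum_t a_in b_in t_in colour_t; exists (blocks A n a b t); split.
- exact: blocks_solution sum_t.
- exact: blocks_entries a_in b_in t_in.
- by rewrite /zero_sum blocks_colour_sum.
Qed.

Theorem lemma1 (k r : nat) (chi : nat -> bool) :
  0 < k -> 0 < r -> r %| k -> 2 * r <= k ->
  chi 1 = false -> (2 <= r -> chi (r - 1) = false) ->
  exists x : nat -> nat,
    [/\ is_solution k x, entries_in k (r * k - 2 * r + 1) x & zero_sum r k chi x].
Proof.
move=> k_gt0 r_gt0 r_dvd_k le_2r_k chi1 chi_r1.
set N := r * k - 2 * r + 1.
have ones_witness : r = 1 \/ chi k.-1 = false ->
    exists x, [/\ is_solution k x, entries_in k N x & zero_sum r k chi x].
  move=> r1_or_chik.
  apply: (blocks_witness (A := k.-1) (n := 0) (a := 1) (b := 1) (t := k.-1));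
    try nia.
  by rewrite chi1 !muln0; case: r1_or_chik => [-> | ->]; rewrite ?modn1.
have [r1 | r_ge2] : r = 1 \/ 2 <= r by lia.
  by apply: ones_witness; left.
case chik: (chi k.-1); last by apply: ones_witness; right.
case chiN: (chi N).
  apply: (blocks_witness (A := r - 1) (n := k - r) (a := k.-1) (b := 1) (t := N));
    try nia.
  by rewrite chik chi1 chiN /= muln1 muln0 addn0 subnK // modnn mod0n.
case chir: (chi r).
  apply: (blocks_witness (A := k - r) (n := r - 1) (a := r) (b := r - 1) (t := N));
    try nia.
  rewrite chir chi_r1 // chiN /= muln1 muln0 !addn0 mod0n.
  by apply/eqP; exact: dvdn_sub r_dvd_k (dvdnn r).
apply: (blocks_witness (A := k - 2) (n := 1) (a := r) (b := 1) (t := N)); try nia.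
by rewrite chir chi1 chiN /= !muln0.
Qed.
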